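(* Let $n\ge5$, let $A\in\mathrm{SGL}_n(\mathbb{F}_2)$ be nonalternate, and let $\mathbf{x}_1,\mathbf{x}_2,\mathbf{x}_3\in\mathbb{F}_2^n$ be linearly independent with $[\mathbf{x}_i^{\top}A^{-1}\mathbf{x}_j]_{i,j=1}^3=\begin{pmatrix}1&1&0\\1&1&0\\0&0&0\end{pmatrix}$. Then there exists $\mathbf{w}\in\mathbb{F}_2^n$ such that either $\mathbf{w}^{\top}A^{-1}\mathbf{w}=1=\mathbf{w}^{\top}A^{-1}\mathbf{x}_1$ and $\mathbf{w}^{\top}A^{-1}\mathbf{x}_2=0=\mathbf{w}^{\top}A^{-1}\mathbf{x}_3$, or $\mathbf{w}^{\top}A^{-1}\mathbf{w}=1=\mathbf{w}^{\top}A^{-1}\mathbf{x}_2$ and $\mathbf{w}^{\top}A^{-1}\mathbf{x}_1=0=\mathbf{w}^{\top}A^{-1}\mathbf{x}_3$.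
   Context: $\mathrm{SGL}_n(\mathbb{F}_2)$ is the set of invertible symmetric $n\times n$ matrices over the binary field $\mathbb{F}_2$. A symmetric matrix over $\mathbb{F}_2$ is alternate if its diagonal is zero; nonalternate otherwise. *)

From mathcomp Require Import all_boot all_algebra.
Set Implicit Arguments. Unset Strict Implicit. Unset Printing Implicit Defensive.
Import GRing.Theory.
Local Open Scope ring_scope.

Definition SGL (n : nat) (A : 'M['F_2]_n) : Prop :=
  A^T = A /\ A \in unitmx.

(* a symmetric matrix is alternate iff its diagonal is zero *)
Definition alternate (n : nat) (A : 'M['F_2]_n) : Prop :=
  forall i : 'I_n, A i i = 0.

Definition bform (n : nat) (A : 'M['F_2]_n) (x y : 'cV['F_2]_n) : 'F_2 :=
  (x^T *m invmx A *m y) ord0 ord0.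

Definition lin_indep (n k : nat) (x : 'I_k -> 'cV['F_2]_n) : Prop :=
  row_free (\matrix_(i < k, j < n) x i j ord0).

From mathcomp Require Import all_boot all_algebra.
Set Implicit Arguments. Unset Strict Implicit. Unset Printing Implicit Defensive.
Local Open Scope ring_scope.
Import GRing.Theory.

(* Since x_1, x_2, x_3 are independent and A^-1 is invertible, some y has
   y^T A^-1 x_i = 1 for i = 1 and 0 otherwise.  If y^T A^-1 y = 1 then w = y
   works for the first alternative; otherwise w = x_1 + y has
   w^T A^-1 w = x_1^T A^-1 x_1 + y^T A^-1 y = 1 in characteristic 2, and gives
   the second alternative. *)

Lemma row_free_solve (F : fieldType) (k n : nat) (M : 'M[F]_(k, n)) :
  row_free M -> forall c : 'cV_k, exists y : 'cV_n, M *m y = c.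
Proof. by case/row_freeP=> P MP c; exists (P *m c); rewrite mulmxA MP mul1mx. Qed.

Lemma F2_addrr (a : 'F_2) : a + a = 0.
Proof. exact/addrr_pchar2/pchar_Fp. Qed.

Lemma F2_neq1 (a : 'F_2) : a != 1 -> a = 0.
Proof. by case: a => [[|[|m]] //] a_lt2 _; apply/val_inj. Qed.

Section BilinearForm.

Variables (n : nat) (A : 'M['F_2]_n).

Lemma bformDl (u v w : 'cV_n) : bform A (u + v) w = bform A u w + bform A v w.
Proof. by rewrite /bform linearD /= !mulmxDl mxE. Qed.

Lemma bformDr (u v w : 'cV_n) : bform A w (u + v) = bform A w u + bform A w v.
Proof. by rewrite /bform mulmxDr mxE. Qed.

Lemma bform_trE (u v : 'cV_n) : bform A u v = (v^T *m (invmx A)^T *m u) ord0 ord0.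
Proof. by rewrite /bform -[u in RHS]trmxK -mulmxA -!trmx_mul [RHS]mxE mulmxA. Qed.

Lemma bform_dual (k : nat) (x : 'I_k -> 'cV_n) (c : 'I_k -> 'F_2) :
  A \in unitmx -> lin_indep x -> exists y, forall i, bform A y (x i) = c i.
Proof.
move=> unitA indep.
set M := \matrix_(i < k, j < n) x i j ord0.
have free_MB : row_free (M *m (invmx A)^T).
  by rewrite /row_free mxrankMfree ?row_free_unit ?unitmx_tr ?unitmx_inv.
have [y My] := row_free_solve free_MB (\col_i c i).
exists y => i; have rowM : row i M = (x i)^T by apply/rowP => j; rewrite !mxE.
by rewrite bform_trE -rowM -!row_mul My !mxE.
Qed.

Hypothesis symA : A^T = A.

Lemma bformC (u v : 'cV_n) : bform A u v = bform A v u.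
Proof. by rewrite bform_trE trmx_inv symA. Qed.

Lemma bform_diagD (u v : 'cV_n) :
  bform A (u + v) (u + v) = bform A u u + bform A v v.
Proof.
rewrite bformDl !bformDr [bform A v u]bformC [bform A u v + _]addrC.
by rewrite addrACA F2_addrr addr0.
Qed.

End BilinearForm.

Theorem lemma4p1 (n : nat) (A : 'M['F_2]_n) (x : 'I_3 -> 'cV['F_2]_n) :
  (5 <= n)%N ->
  SGL A ->
  ~ alternate A ->
  lin_indep x ->
  (forall i j : 'I_3,
     bform A (x i) (x j) = (\matrix_(i0 < 3, j0 < 3)
        (if ((i0 < 2)%N && (j0 < 2)%N) then 1 else 0 : 'F_2)) i j) ->
  exists w : 'cV['F_2]_n,
    (bform A w w = 1 /\ bform A w (x (@Ordinal 3 0 isT)) = 1 /\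
     bform A w (x (@Ordinal 3 1 isT)) = 0 /\ bform A w (x (@Ordinal 3 2 isT)) = 0)
    \/
    (bform A w w = 1 /\ bform A w (x (@Ordinal 3 1 isT)) = 1 /\
     bform A w (x (@Ordinal 3 0 isT)) = 0 /\ bform A w (x (@Ordinal 3 2 isT)) = 0).
Proof.
move=> _ [symA unitA] _ indep gram.
have [y dual] := bform_dual (fun i => (i == ord0)%:R) unitA indep.
have [yy1 | /F2_neq1 yy0] := eqVneq (bform A y y) 1.
  by exists y; left; rewrite yy1 !dual.
exists (x ord0 + y); right.
by rewrite bform_diagD // yy0 !bformDl !gram ![bform A y _]dual !mxE /= !addr0 F2_addrr.
Qed.
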